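(* Let $G$ be a group with finite generating set $S$ (with $S=S^{-1}$, $e\notin S$), and let $N\le G$ be a normal subgroup which is infinite cyclic. Then $\kappa(g)=0$ for all $g\in N\smallsetminus\{e\}$.
   Context: For a group $G$ with finite generating set $S$ ($S=S^{-1}$, $e\notin S$), $|x|$ denotes the word length of $x\in G$ with respect to $S$. For $g\in G$ define $\mathrm{Av}(g)=\frac{1}{|S|}\sum_{a\in S}|a^{-1}ga|$, and for $g\neq e$ define the curvature $\kappa(g)=\frac{|g|-\mathrm{Av}(g)}{|g|}$. *)

From Stdlib Require Import Reals ZArith List ClassicalEpsilon.
Import ListNotations.
Open Scope R_scope.

Record Group := {
  carrier :> Type;
  gmul : carrier -> carrier -> carrier;
  ginv : carrier -> carrier;
  gone : carrier;
  gmulA : forall x y z, gmul x (gmul y z) = gmul (gmul x y) z;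
  gmul1l : forall x, gmul gone x = x;
  gmul1r : forall x, gmul x gone = x;
  gmulVl : forall x, gmul (ginv x) x = gone;
  gmulVr : forall x, gmul x (ginv x) = gone
}.

Arguments gmul {g} x y.
Arguments ginv {g} x.
Arguments gone {g}.

Definition word_prod {G : Group} (w : list G) : G :=
  fold_right gmul gone w.

Definition word_in {G : Group} (S : list G) (w : list G) : Prop :=
  Forall (fun a => In a S) w.

Definition fin_sym_gen_set {G : Group} (S : list G) : Prop :=
  NoDup S /\
  (forall a, In a S -> In (ginv a) S) /\
  ~ In gone S /\
  (forall x : G, exists w, word_in S w /\ word_prod w = x).

Definition is_word_length {G : Group} (S : list G) (x : G) (n : nat) : Prop :=
  (exists w, word_in S w /\ word_prod w = x /\ length w = n) /\
  (forall w, word_in S w -> word_prod w = x -> (n <= length w)%nat).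

(* |x|_S : the word length (well defined when S generates G). *)
Definition wlen {G : Group} (S : list G) (x : G) : nat :=
  epsilon (inhabits 0%nat) (is_word_length S x).

Definition Av {G : Group} (S : list G) (g : G) : R :=
  (/ INR (length S)) *
  fold_right Rplus 0 (map (fun a => INR (wlen S (gmul (ginv a) (gmul g a)))) S).

Definition kappa {G : Group} (S : list G) (g : G) : R :=
  (INR (wlen S g) - Av S g) / INR (wlen S g).

Definition gzpow {G : Group} (t : G) (k : Z) : G :=
  match k with
  | Z0 => gone
  | Zpos p => Nat.iter (Pos.to_nat p) (gmul t) gone
  | Zneg p => Nat.iter (Pos.to_nat p) (gmul (ginv t)) gone
  end.

Definition is_normal_subgroup {G : Group} (N : G -> Prop) : Prop :=
  N gone /\
  (forall x y, N x -> N y -> N (gmul x y)) /\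
  (forall x, N x -> N (ginv x)) /\
  (forall x g, N x -> N (gmul (ginv g) (gmul x g))).

Definition is_infinite_cyclic {G : Group} (N : G -> Prop) : Prop :=
  exists t : G,
    (forall x, N x <-> exists k : Z, x = gzpow t k) /\
    (forall k : Z, gzpow t k = gone -> k = 0%Z).

(* Conjugation by any a restricts to an automorphism of N = <t> ≅ Z, and the
   only automorphisms of Z are ±1; so a^-1 g a is g or g^-1 for every g in N.
   Word length is invariant under inversion (S = S^-1), hence every term of
   Av(g) equals |g|, and Av(g) = |g|. *)

From Stdlib Require Import Reals ZArith List.
From Stdlib Require Import Lia Wf_nat Classical ClassicalEpsilon.
Open Scope R_scope.

Arguments gmulA {g} x y z.
Arguments gmul1l {g} x.
Arguments gmul1r {g} x.
Arguments gmulVl {g} x.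
Arguments gmulVr {g} x.

Section GroupTheory.
Context {G : Group}.

Lemma gmul_cancel_l (x y z : G) : gmul x y = gmul x z -> y = z.
Proof.
  intro H.
  rewrite <- (gmul1l y), <- (gmul1l z), <- (gmulVl x), <- !gmulA, H.
  reflexivity.
Qed.

Lemma ginv_unique (x y : G) : gmul x y = gone -> y = ginv x.
Proof. intro H. apply (gmul_cancel_l x). rewrite H, gmulVr. reflexivity. Qed.

Lemma ginv_involutive (x : G) : ginv (ginv x) = x.
Proof. symmetry. apply ginv_unique, gmulVl. Qed.

Lemma ginv_gmul (x y : G) : ginv (gmul x y) = gmul (ginv y) (ginv x).
Proof.
  symmetry. apply ginv_unique.
  rewrite gmulA, <- (gmulA x y), gmulVr, gmul1r, gmulVr. reflexivity.
Qed.

Lemma ginv_gone : ginv (@gone G) = gone.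
Proof. symmetry. apply ginv_unique, gmul1l. Qed.

Lemma gzpow_of_nat (t : G) (n : nat) :
  gzpow t (Z.of_nat n) = Nat.iter n (gmul t) gone.
Proof. destruct n; [reflexivity|]. simpl. rewrite SuccNat2Pos.id_succ. reflexivity. Qed.

Lemma gzpow_opp_of_nat (t : G) (n : nat) :
  gzpow t (- Z.of_nat n) = Nat.iter n (gmul (ginv t)) gone.
Proof. destruct n; [reflexivity|]. simpl. rewrite SuccNat2Pos.id_succ. reflexivity. Qed.

Lemma gzpow_succ (t : G) (k : Z) : gzpow t (Z.succ k) = gmul t (gzpow t k).
Proof.
  destruct (Z_le_gt_dec 0 k).
  - replace k with (Z.of_nat (Z.to_nat k)) by lia.
    replace (Z.succ (Z.of_nat (Z.to_nat k))) with (Z.of_nat (S (Z.to_nat k))) by lia.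
    rewrite !gzpow_of_nat. reflexivity.
  - set (n := Z.to_nat (- Z.succ k)).
    replace k with (- Z.of_nat (S n))%Z by lia.
    replace (Z.succ (- Z.of_nat (S n))) with (- Z.of_nat n)%Z by lia.
    rewrite !gzpow_opp_of_nat. simpl. rewrite gmulA, gmulVr, gmul1l. reflexivity.
Qed.

Lemma gzpow_pred (t : G) (k : Z) : gzpow t (Z.pred k) = gmul (ginv t) (gzpow t k).
Proof.
  rewrite <- (Z.succ_pred k) at 2.
  rewrite gzpow_succ, gmulA, gmulVl, gmul1l. reflexivity.
Qed.

Lemma gzpow_add (t : G) (a b : Z) : gzpow t (a + b) = gmul (gzpow t a) (gzpow t b).
Proof.
  induction a using Z.peano_ind.
  - simpl. rewrite gmul1l. reflexivity.
  - rewrite Z.add_succ_l, !gzpow_succ, IHa, gmulA. reflexivity.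
  - rewrite Z.add_pred_l, !gzpow_pred, IHa, gmulA. reflexivity.
Qed.

Lemma gzpow_opp (t : G) (a : Z) : gzpow t (- a) = ginv (gzpow t a).
Proof.
  apply ginv_unique. rewrite <- gzpow_add, Z.add_opp_diag_r. reflexivity.
Qed.

Lemma gzpow_mul (t : G) (a b : Z) : gzpow t (a * b) = gzpow (gzpow t a) b.
Proof.
  induction b using Z.peano_ind.
  - rewrite Z.mul_0_r. reflexivity.
  - rewrite Z.mul_succ_r, gzpow_succ, Z.add_comm, gzpow_add, IHb. reflexivity.
  - replace (a * Z.pred b)%Z with (- a + a * b)%Z by lia.
    rewrite gzpow_pred, gzpow_add, gzpow_opp, IHb. reflexivity.
Qed.

Lemma gzpow_morph (f : G -> G) (t : G) (k : Z) :
  (forall x y, f (gmul x y) = gmul (f x) (f y)) -> f gone = gone ->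
  (forall x, f (ginv x) = ginv (f x)) ->
  f (gzpow t k) = gzpow (f t) k.
Proof.
  intros fM f1 fV. induction k using Z.peano_ind.
  - exact f1.
  - rewrite !gzpow_succ, fM, IHk. reflexivity.
  - rewrite !gzpow_pred, fM, fV, IHk. reflexivity.
Qed.

Definition conjg (a x : G) : G := gmul (ginv a) (gmul x a).

Lemma conjg_gzpow (a t : G) (k : Z) : conjg a (gzpow t k) = gzpow (conjg a t) k.
Proof.
  apply gzpow_morph; unfold conjg.
  - intros x y. rewrite !gmulA, <- (gmulA _ a (ginv a)), gmulVr, gmul1r. reflexivity.
  - rewrite gmul1l, gmulVl. reflexivity.
  - intro x. rewrite !ginv_gmul, ginv_involutive, gmulA. reflexivity.
Qed.

Lemma conjgK (a x : G) : conjg a (conjg (ginv a) x) = x.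
Proof.
  unfold conjg. rewrite ginv_involutive, !gmulA, gmulVl, gmul1l, <- gmulA, gmulVl, gmul1r.
  reflexivity.
Qed.

Lemma gzpow_infinite_order_eq_self (t : G) (n : Z) :
  (forall k, gzpow t k = gone -> k = 0%Z) -> gzpow t n = t -> n = 1%Z.
Proof.
  intros Hinf Hn.
  assert (H : gzpow t (n + - (1)) = gone).
  { rewrite gzpow_add, Hn, gzpow_opp. simpl. rewrite gmul1r, gmulVr. reflexivity. }
  apply Hinf in H. lia.
Qed.

Lemma conjg_normal_infinite_cyclic (N : G -> Prop) (a g : G) :
  is_normal_subgroup N -> is_infinite_cyclic N -> N g ->
  conjg a g = g \/ conjg a g = ginv g.
Proof.
  intros [_ [_ [_ HNconj]]] [t [Ht Hinf]] Ng.
  assert (Nt : N t) by (apply Ht; exists 1%Z; simpl; rewrite gmul1r; reflexivity).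
  destruct (proj1 (Ht g) Ng) as [j ->].
  destruct (proj1 (Ht _) (HNconj t a Nt)) as [k Hk].
  destruct (proj1 (Ht _) (HNconj t (ginv a) Nt)) as [m Hm].
  fold (conjg a t) in Hk. fold (conjg (ginv a) t) in Hm.
  assert (Hkm : (k * m)%Z = 1%Z).
  { apply (gzpow_infinite_order_eq_self t); [exact Hinf|].
    rewrite gzpow_mul, <- Hk, <- conjg_gzpow, <- Hm. apply conjgK. }
  rewrite conjg_gzpow, Hk, <- gzpow_mul, <- gzpow_opp.
  destruct (Z.eq_mul_1 k m Hkm) as [-> | ->].
  - left. rewrite Z.mul_1_l. reflexivity.
  - right. rewrite Z.mul_opp_l, Z.mul_1_l. reflexivity.
Qed.

Lemma word_prod_app (w1 w2 : list G) :
  word_prod (w1 ++ w2) = gmul (word_prod w1) (word_prod w2).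
Proof.
  induction w1 as [|x w1 IH]; simpl.
  - rewrite gmul1l. reflexivity.
  - unfold word_prod in *. simpl. rewrite IH, gmulA. reflexivity.
Qed.

Lemma word_prod_rev_ginv (w : list G) : word_prod (rev (map ginv w)) = ginv (word_prod w).
Proof.
  induction w as [|x w IH]; simpl.
  - symmetry. apply ginv_gone.
  - rewrite word_prod_app, IH. unfold word_prod at 2. simpl.
    rewrite gmul1r, ginv_gmul. reflexivity.
Qed.

Variable S : list G.
Hypothesis HS : fin_sym_gen_set S.

Lemma wlen_spec (x : G) : is_word_length S x (wlen S x).
Proof.
  destruct HS as [_ [_ [_ Hgen]]]. unfold wlen. apply epsilon_spec.
  set (P n := exists w, word_in S w /\ word_prod w = x /\ length w = n).
  destruct (dec_inh_nat_subset_has_unique_least_element P) as [n [[Pn Hleast] _]].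
  - intro n. apply classic.
  - destruct (Hgen x) as [w [Hw Hx]]. exists (length w), w. auto.
  - exists n. split; [exact Pn|]. intros w Hw Hx. apply Hleast. exists w. auto.
Qed.

Lemma wlen_ginv_le (x : G) : (wlen S (ginv x) <= wlen S x)%nat.
Proof.
  destruct (wlen_spec x) as [[w [Hw [Hx Hlen]]] _].
  destruct (wlen_spec (ginv x)) as [_ Hmin].
  rewrite <- Hlen, <- length_map with (f := ginv), <- length_rev.
  apply Hmin.
  - destruct HS as [_ [HSinv _]]. unfold word_in in *. rewrite Forall_forall in *.
    intros y Hy. apply in_rev, in_map_iff in Hy. destruct Hy as [z [<- Hz]]. auto.
  - rewrite word_prod_rev_ginv, Hx. reflexivity.
Qed.

Lemma wlen_ginv (x : G) : wlen S (ginv x) = wlen S x.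
Proof.
  apply Nat.le_antisymm; [apply wlen_ginv_le|].
  rewrite <- (ginv_involutive x) at 1. apply wlen_ginv_le.
Qed.

Lemma gen_set_nil_trivial (x : G) : S = nil -> x = gone.
Proof.
  intros ->. destruct HS as [_ [_ [_ Hgen]]].
  destruct (Hgen x) as [[|y w] [Hw <-]]; [reflexivity|].
  inversion Hw. contradiction.
Qed.

End GroupTheory.

Lemma fold_right_Rplus_map_const {A : Type} (f : A -> R) (c : R) (l : list A) :
  (forall a, In a l -> f a = c) -> fold_right Rplus 0 (map f l) = INR (length l) * c.
Proof.
  induction l as [|x l IH]; intro Hc; [simpl; ring|].
  cbn [map fold_right length]. rewrite IH, (Hc x), S_INR; [ring | left; reflexivity |].
  intros a Ha. apply Hc. right. exact Ha.
Qed.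

Lemma Av_conjg_invariant {G : Group} (S : list G) (g : G) :
  S <> nil -> (forall a, In a S -> wlen S (conjg a g) = wlen S g) ->
  Av S g = INR (wlen S g).
Proof.
  intros Hnil Hconj. unfold Av.
  rewrite fold_right_Rplus_map_const with (c := INR (wlen S g)).
  - field. apply not_0_INR. destruct S; [congruence|discriminate].
  - intros a Ha. fold (conjg a g). rewrite Hconj by exact Ha. reflexivity.
Qed.

Theorem mainTheorem3 (G : Group) (S : list G) (N : G -> Prop)
  (HS : fin_sym_gen_set S)
  (HN : is_normal_subgroup N)
  (HNcyc : is_infinite_cyclic N) :
  forall g : G, N g -> g <> gone -> kappa S g = 0.
Proof.
  intros g Ng Hg.
  assert (Hav : Av S g = INR (wlen S g)).
  { apply Av_conjg_invariant.
    - intros Hnil. exact (Hg (gen_set_nil_trivial S HS g Hnil)).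
    - intros a _.
      destruct (conjg_normal_infinite_cyclic N a g HN HNcyc Ng) as [-> | ->].
      + reflexivity.
      + apply wlen_ginv, HS. }
  unfold kappa. rewrite Hav. unfold Rdiv. ring.
Qed.
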